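(* Let $\phi:[0,\infty)\to[0,\infty)$ be an increasing bijection such that $\sum_{k=1}^\infty\frac{1}{1\vee\log(\phi^{-1}(k))}=\infty$. Then there exist an increasing bijection $\psi:[0,\infty)\to[0,\infty)$ with $\psi(x)\leq\phi(x)$ and $\psi(x)\leq\sqrt{x}$ for every $x\geq0$, and a strictly increasing function $a:\mathbb{N}\to\mathbb{N}$ satisfying \[ \lim_{k\to\infty}\big(a(k)-a(k-1)\big)=+\infty \qquad\text{and}\qquad \sum_{k=1}^\infty\frac{1}{1\vee\log(\psi^{-1}(a(k)))}=\infty, \] such that every sequence $(z_n)_{n\geq0}$ of positive reals satisfying $\limsup_{n\to\infty}e^{\phi(n)}z_n<\infty$ satisfies \[ \liminf_{k\to\infty}\frac1k\#\{1\leq r\leq k: z\text{ is }\psi\text{-good on scale }a(r)\}\geq\frac12 . \]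
   Context: For a positive sequence $z=(z_n)_{n\geq0}$ with $z_n\to0$, let $z_n^*=\min_{0\leq m\leq n}z_m$ and $k_0=\lceil 2\log z_0^{-1}\rceil$. For $k\geq k_0$ let $D_k=(\{z_m^*:m\geq1\}\cap[e^{-k-1},e^{-k}])\cup\{e^{-k},e^{-k-1}\}$, $N_k=|D_k|-1$, and list the elements of $D_k$ in decreasing order as $e^{-k}=d_{0,k}>d_{1,k}>\dots>d_{N_k,k}=e^{-k-1}$. For an increasing function $\psi$, write $\psi^{-1}(x)=\min\{y\geq0:\psi(y)\geq x\}$. For $k\geq k_0$, $z$ is $\psi$-good on scale $k$ if \[ \prod\Big\{\tfrac{d_{i+1,k}}{d_{i,k}}:0\leq i<N_k,\ \tfrac{d_{i+1,k}}{d_{i,k}}\leq\exp\big[-\tfrac{k}{2\psi^{-1}(k)}\big]\Big\}\leq e^{-1/2}. \] (Goodness is only defined for scales $k\geq k_0$; the finitely many scales $a(r)<k_0$ do not affect the $\liminf$.) $\phi^{-1}$ is the inverse of $\phi$. *)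

From Stdlib Require Import Reals Lra Lia List ClassicalEpsilon.
From Coquelicot Require Import Coquelicot.
Open Scope R_scope.

(* f : [0,oo) -> [0,oo) is an increasing bijection (f given as a total
   function R -> R; only its values on [0,oo) matter). *)
Definition inc_bij (f : R -> R) : Prop :=
  (forall x, 0 <= x -> 0 <= f x) /\
  (forall x y, 0 <= x -> x < y -> f x < f y) /\
  (forall y, 0 <= y -> exists x, 0 <= x /\ f x = y).

(* psi^{-1}(x) = min { y >= 0 : psi y >= x }  (taken as the infimum,
   which is the minimum whenever the minimum exists). *)
Definition geninv (psi : R -> R) (x : R) : R :=
  real (Glb_Rbar (fun y => 0 <= y /\ x <= psi y)).

Fixpoint zstar (z : nat -> R) (n : nat) : R :=
  match n with
  | O => z O
  | S n' => Rmin (zstar z n') (z (S n'))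
  end.

Definition ceilZ (x : R) : Z := (- Int_part (- x))%Z.

Definition k0 (z : nat -> R) : Z := ceilZ (2 * ln (/ z O)).

Definition Dk (z : nat -> R) (k : nat) (d : R) : Prop :=
  (exists m, (1 <= m)%nat /\ d = zstar z m /\
             exp (- (INR k + 1)) <= d <= exp (- INR k))
  \/ d = exp (- INR k) \/ d = exp (- (INR k + 1)).

Fixpoint strictly_decreasing (l : list R) : Prop :=
  match l with
  | d :: ((d' :: _) as tl) => d' < d /\ strictly_decreasing tl
  | _ => True
  end.

Fixpoint gap_prod (t : R) (l : list R) : R :=
  match l with
  | d :: ((d' :: _) as tl) =>
      (if Rle_dec (d' / d) t then d' / d else 1) * gap_prod t tl
  | _ => 1
  end.

(* z is psi-good on scale k (only defined for k >= k_0; we count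
   scales k < k_0 as not good, which does not affect the liminf) *)
Definition good (psi : R -> R) (z : nat -> R) (k : nat) : Prop :=
  (k0 z <= Z.of_nat k)%Z /\
  exists l : list R,
    strictly_decreasing l /\ (forall d, In d l <-> Dk z k d) /\
    gap_prod (exp (- (INR k / (2 * geninv psi (INR k))))) l <= exp (- (1/2)).

Fixpoint count_upto (P : nat -> Prop) (k : nat) : nat :=
  match k with
  | O => O
  | S k' => (count_upto P k' +
             (if excluded_middle_informative (P k) then 1 else 0))%nat
  end.

From Stdlib Require Import Reals Lra Lia Arith List ClassicalEpsilon.
From Coquelicot Require Import Coquelicot.
Open Scope R_scope.

(* If e^(phi n) z_n <= C eventually, a running minimum z*_m >= e^(-k-1) forces
   m <= phi^-1(k + 1 + log C) + O(1), so for large k the set D_k has fewer than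
   k + phi^-1(2k) points.  The ratios of consecutive points of D_k multiply to
   e^-1, and each ratio left out of the gap product exceeds
   exp(-k / (2 psi^-1(k))); as psi^-1(k) >= max(2 k^2, 2 phi^-1(2k)^2), there
   are too few of them to bring their product below e^(-1/2).  Hence every
   large scale is psi-good.

   For the scales, h(k) = 1 / max(1 v log k, 1 v log phi^-1(2k)) has divergent
   sum (split on which logarithm dominates), and a(r+1) = a(r) + 1 +
   floor(sqrt(h_0 + ... + h_(a(r)))) has gaps tending to infinity, while
   sum_r h(a(r)) still diverges because sum_k h(k) / sqrt(h_0 + ... + h_k) does. *)

Section IncreasingBijection.

Variable f : R -> R.
Hypothesis f_inc_bij : inc_bij f.

Lemma inc_bij_le x y : 0 <= x -> x <= y -> f x <= f y.
Proof.
  pose proof f_inc_bij as [_ [f_lt _]]; intros Hx Hxy.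
  destruct (Req_dec x y) as [<-|Hne]; [lra|].
  apply Rlt_le, f_lt; lra.
Qed.

Lemma inc_bij_le_inv x y : 0 <= x -> 0 <= y -> f x <= f y -> x <= y.
Proof.
  pose proof f_inc_bij as [_ [f_lt _]]; intros Hx Hy Hf.
  destruct (Rle_lt_dec x y) as [|Hyx]; [easy|].
  specialize (f_lt y x Hy Hyx); lra.
Qed.

Lemma geninv_eq x y : 0 <= x -> f x = y -> geninv f y = x.
Proof.
  intros Hx Hfx; unfold geninv.
  rewrite (is_glb_Rbar_unique _ (Finite x)); [easy|]. split.
  - intros w [Hw Hyw]; simpl; apply inc_bij_le_inv; lra.
  - intros b Hb; apply Hb; lra.
Qed.

Lemma geninv_spec y : 0 <= y -> 0 <= geninv f y /\ f (geninv f y) = y.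
Proof.
  pose proof f_inc_bij as [_ [_ f_onto]]; intros Hy.
  destruct (f_onto y Hy) as [x [Hx Hfx]].
  rewrite (geninv_eq x y); auto.
Qed.

Lemma le_geninv x y : 0 <= x -> 0 <= y -> f x <= y -> x <= geninv f y.
Proof.
  intros Hx Hy Hfx; destruct (geninv_spec y Hy) as [Hg Hfg].
  apply inc_bij_le_inv; lra.
Qed.

Lemma geninv_le_compat x y : 0 <= x -> x <= y -> geninv f x <= geninv f y.
Proof.
  intros Hx Hxy; destruct (geninv_spec x Hx) as [Hg Hfg].
  apply le_geninv; lra.
Qed.

End IncreasingBijection.

(* The [sqrt] terms make [damp_inv phi k] at least [2 k^2] and
   [2 phi^-1(2k)^2], enough for every late scale to be good, while keeping it
   polynomial in [k] and [phi^-1(2k)], so that its logarithm stays comparable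
   to that of [phi^-1]. *)
Definition damp (phi : R -> R) (x : R) : R :=
  Rmin (phi x) (Rmin (sqrt (x / 2)) (phi (sqrt (x / 2)) / 2)).

Definition damp_inv (phi : R -> R) (y : R) : R :=
  Rmax (geninv phi y) (Rmax (2 * y ^ 2) (2 * geninv phi (2 * y) ^ 2)).

Lemma sqrt_half_twice_sq x : 0 <= x -> sqrt (2 * x ^ 2 / 2) = x.
Proof. intros Hx; replace (2 * x ^ 2 / 2) with (x ^ 2) by field; now apply sqrt_pow2. Qed.

Lemma Rmin_lt_compat a b c d : a < c -> b < d -> Rmin a b < Rmin c d.
Proof. intros; unfold Rmin; repeat destruct Rle_dec; lra. Qed.

Section Damping.

Variable phi : R -> R.
Hypothesis phi_inc_bij : inc_bij phi.

Lemma damp_le x : damp phi x <= phi x.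
Proof. apply Rmin_l. Qed.

Lemma damp_le_sqrt x : 0 <= x -> damp phi x <= sqrt x.
Proof.
  intros Hx; apply (Rle_trans _ _ _ (Rmin_r _ _)), (Rle_trans _ _ _ (Rmin_l _ _)).
  apply sqrt_le_1; lra.
Qed.

Lemma damp_inv_ge y : 2 * y ^ 2 <= damp_inv phi y.
Proof. apply (Rle_trans _ _ _ (Rmax_l _ _) (Rmax_r _ _)). Qed.

Lemma damp_damp_inv y : 0 <= y -> damp phi (damp_inv phi y) = y.
Proof.
  intros Hy.
  destruct (geninv_spec phi phi_inc_bij y Hy) as [Hp1 Hphi1].
  destruct (geninv_spec phi phi_inc_bij (2 * y)) as [Hp2 Hphi2]; [lra|].
  pose proof (damp_inv_ge y) as Hx2.
  unfold damp_inv in *; set (p1 := geninv phi y) in *; set (p2 := geninv phi (2 * y)) in *.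
  set (x := Rmax p1 _) in *.
  assert (Hx1 : p1 <= x) by apply Rmax_l.
  assert (Hx3 : 2 * p2 ^ 2 <= x) by apply (Rle_trans _ _ _ (Rmax_r _ _) (Rmax_r _ _)).
  assert (Hsy : y <= sqrt (x / 2)).
  { rewrite <- (sqrt_half_twice_sq y) at 1 by lra; apply sqrt_le_1; nra. }
  assert (Hsp2 : p2 <= sqrt (x / 2)).
  { rewrite <- (sqrt_half_twice_sq p2) at 1 by lra; apply sqrt_le_1; nra. }
  assert (Hlow : y <= damp phi x).
  { assert (y <= phi x) by (rewrite <- Hphi1; apply inc_bij_le; auto).
    assert (2 * y <= phi (sqrt (x / 2))) by (rewrite <- Hphi2; apply inc_bij_le; auto).
    repeat apply Rmin_glb; lra. }
  assert (Hup : damp phi x <= y).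
  { assert (Hcases : x = p1 \/ x = 2 * y ^ 2 \/ x = 2 * p2 ^ 2)
      by (unfold x, Rmax; repeat destruct Rle_dec; auto).
    destruct Hcases as [E|[E|E]]; rewrite E; unfold damp.
    - rewrite Hphi1; apply Rmin_l.
    - rewrite sqrt_half_twice_sq by lra.
      apply (Rle_trans _ _ _ (Rmin_r _ _) (Rmin_l _ _)).
    - rewrite sqrt_half_twice_sq, Hphi2 by lra.
      apply (Rle_trans _ _ _ (Rmin_r _ _)), (Rle_trans _ _ _ (Rmin_r _ _)); lra. }
  lra.
Qed.

Lemma inc_bij_damp : inc_bij (damp phi).
Proof.
  pose proof phi_inc_bij as [phi_nonneg [phi_lt _]]; split; [|split].
  - intros x Hx; pose proof (sqrt_pos (x / 2)) as Hs.
    pose proof (phi_nonneg x Hx); pose proof (phi_nonneg _ Hs).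
    repeat apply Rmin_glb; lra.
  - intros x y Hx Hxy.
    assert (Hs : sqrt (x / 2) < sqrt (y / 2)) by (apply sqrt_lt_1; lra).
    assert (phi (sqrt (x / 2)) < phi (sqrt (y / 2))) by (apply phi_lt; auto; apply sqrt_pos).
    apply Rmin_lt_compat; [apply phi_lt; auto|apply Rmin_lt_compat; lra].
  - intros y Hy; exists (damp_inv phi y); split; [|now apply damp_damp_inv].
    pose proof (damp_inv_ge y); nra.
Qed.

Lemma geninv_damp y : 0 <= y -> geninv (damp phi) y = damp_inv phi y.
Proof.
  intros Hy; apply geninv_eq; [exact inc_bij_damp| |now apply damp_damp_inv].
  pose proof (damp_inv_ge y); nra.
Qed.

End Damping.

Lemma strictly_decreasing_cons y l :
  strictly_decreasing (y :: l) <-> strictly_decreasing l /\ List.Forall (fun w => w < y) l.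
Proof.
  revert y; induction l as [|a l IH]; intros y; [simpl; split; auto|].
  change (strictly_decreasing (y :: a :: l)) with (a < y /\ strictly_decreasing (a :: l)).
  rewrite (IH a), !List.Forall_cons_iff, !List.Forall_forall; split.
  - intros [Hay [Hl Hlt]]; repeat split; auto.
    intros w Hw; specialize (Hlt w Hw); lra.
  - intros [[Hl Hlt] [Hay _]]; auto.
Qed.

Fixpoint insert_desc (x : R) (l : list R) : list R :=
  match l with
  | nil => x :: nil
  | y :: tl => if Rlt_dec y x then x :: y :: tl else y :: insert_desc x tl
  end.

Lemma in_insert_desc x l y : In y (insert_desc x l) <-> y = x \/ In y l.
Proof.
  induction l as [|a tl IH]; simpl; [intuition|].
  destruct Rlt_dec; simpl; [|rewrite IH]; intuition.
Qed.

Lemma length_insert_desc x l : length (insert_desc x l) = S (length l).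
Proof. induction l as [|a tl IH]; simpl; auto; destruct Rlt_dec; simpl; auto. Qed.

Lemma strictly_decreasing_insert_desc x l :
  strictly_decreasing l -> ~ In x l -> strictly_decreasing (insert_desc x l).
Proof.
  induction l as [|y tl IH]; intros Hs Hx; simpl; [easy|].
  destruct Rlt_dec as [Hyx|Hxy]; [now split|].
  apply strictly_decreasing_cons in Hs as [Hs Hlt].
  apply strictly_decreasing_cons; split.
  - apply IH; auto; intros Hin; apply Hx; now right.
  - rewrite List.Forall_forall in *; intros w Hw.
    apply in_insert_desc in Hw as [->|Hw]; auto.
    assert (x <> y) by (intros ->; apply Hx; now left); lra.
Qed.

Lemma strictly_decreasing_enum (Q : R -> Prop) (L : list R) :
  exists l, strictly_decreasing l /\ (forall d, In d l <-> In d L /\ Q d) /\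
    (length l <= length L)%nat.
Proof.
  induction L as [|x L IH]; [exists nil; simpl; intuition|].
  destruct IH as [l [Hs [Hin Hlen]]].
  destruct (classic (Q x /\ ~ In x l)) as [[Hq Hx]|Hnew].
  - exists (insert_desc x l); split; [now apply strictly_decreasing_insert_desc|split].
    + intros d; rewrite in_insert_desc, Hin; simpl; split.
      * intros [<-|[HL HQ]]; auto.
      * intros [[<-|HL] HQ]; auto.
    + rewrite length_insert_desc; simpl; lia.
  - exists l; split; [easy|split; [|simpl; lia]].
    intros d; rewrite Hin; simpl; split; [tauto|].
    intros [[<-|HL] HQ]; [|auto].
    destruct (classic (In x l)) as [Hxl|Hxl]; [now apply Hin|].
    exfalso; auto.
Qed.

Lemma last_cons (a : R) l d : last (a :: l) d = last l a.
Proof.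
  revert a d; induction l as [|b l IH]; intros a d; [easy|].
  change (last (a :: b :: l) d) with (last (b :: l) d); now rewrite !IH.
Qed.

Lemma last_in (d : R) tl : In (last tl d) (d :: tl).
Proof.
  revert d; induction tl as [|d' tl IH]; intros d; [now left|].
  rewrite last_cons; right; apply IH.
Qed.

Lemma strictly_decreasing_head_max d tl w :
  strictly_decreasing (d :: tl) -> In w (d :: tl) -> w <= d.
Proof.
  intros Hs [->|Hw]; [lra|].
  apply strictly_decreasing_cons in Hs as [_ Hlt].
  rewrite List.Forall_forall in Hlt; now apply Rlt_le, Hlt.
Qed.

Lemma strictly_decreasing_last_min d tl w :
  strictly_decreasing (d :: tl) -> In w (d :: tl) -> last tl d <= w.
Proof.
  revert d w; induction tl as [|d' tl IH]; intros d w Hs Hw.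
  - destruct Hw as [->|[]]; simpl; lra.
  - rewrite last_cons; destruct Hs as [Hd' Hs].
    destruct Hw as [<-|Hw]; [|now apply IH].
    specialize (IH d' d' Hs (or_introl eq_refl)); lra.
Qed.

Lemma gap_prod_pos t l : (forall w, In w l -> 0 < w) -> 0 < gap_prod t l.
Proof.
  induction l as [|d [|d' tl] IH]; intros Hpos; simpl; try lra.
  assert (0 < d) by (apply Hpos; now left).
  assert (0 < d') by (apply Hpos; right; now left).
  apply Rmult_lt_0_compat.
  - destruct Rle_dec; [apply Rdiv_lt_0_compat|]; lra.
  - apply IH; intros w Hw; apply Hpos; now right.
Qed.

(* Every ratio left out of [gap_prod t] exceeds [t], so multiplying by one
   [t] per ratio bounds the product of all ratios, which telescopes. *)
Lemma gap_prod_mul_pow_le t d tl n : 0 <= t <= 1 -> (length tl <= n)%nat ->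
  (forall w, In w (d :: tl) -> 0 < w) -> gap_prod t (d :: tl) * t ^ n <= last tl d / d.
Proof.
  intros Ht; revert d n; induction tl as [|d' tl IH]; intros d n Hn Hpos.
  - assert (0 < d) by (apply Hpos; now left).
    assert (t ^ n <= 1) by (rewrite <- (pow1 n); apply pow_incr; lra).
    simpl; replace (d / d) with 1 by (field; lra); lra.
  - destruct n as [|n]; [simpl in Hn; lia|].
    assert (0 < d) by (apply Hpos; now left).
    assert (0 < d') by (apply Hpos; right; now left).
    assert (Hpos' : forall w, In w (d' :: tl) -> 0 < w) by (intros w Hw; apply Hpos; now right).
    specialize (IH d' n ltac:(simpl in Hn; lia) Hpos').
    pose proof (gap_prod_pos t _ Hpos'); pose proof (pow_le t n (proj1 Ht)).
    change (gap_prod t (d :: d' :: tl))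
      with ((if Rle_dec (d' / d) t then d' / d else 1) * gap_prod t (d' :: tl)).
    rewrite last_cons, <- tech_pow_Rmult.
    set (c := if Rle_dec (d' / d) t then d' / d else 1).
    assert (Hc : 0 <= c /\ c * t <= d' / d).
    { assert (0 < d' / d) by (apply Rdiv_lt_0_compat; lra).
      unfold c; destruct Rle_dec; split; nra. }
    replace (last tl d' / d) with (d' / d * (last tl d' / d')) by (field; lra).
    replace (c * gap_prod t (d' :: tl) * (t * t ^ n))
      with ((c * t) * (gap_prod t (d' :: tl) * t ^ n)) by ring.
    apply Rmult_le_compat; nra.
Qed.

Lemma gap_prod_mul_pow_le_ratio t l lo hi n : 0 <= t <= 1 ->
  strictly_decreasing l -> (forall w, In w l -> 0 < w) ->
  In hi l -> In lo l -> (length l <= S n)%nat -> gap_prod t l * t ^ n <= lo / hi.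
Proof.
  intros Ht Hs Hpos Hhi Hlo Hlen; destruct l as [|d tl]; [destruct Hhi|].
  pose proof (strictly_decreasing_head_max d tl hi Hs Hhi).
  pose proof (strictly_decreasing_last_min d tl lo Hs Hlo).
  assert (0 < last tl d) by (apply Hpos, last_in).
  assert (0 < hi) by auto; assert (0 < lo) by auto.
  eapply Rle_trans; [apply gap_prod_mul_pow_le; auto; simpl in Hlen; lia|].
  unfold Rdiv; apply Rmult_le_compat; try lra.
  - apply Rlt_le, Rinv_0_lt_compat; lra.
  - apply Rinv_le_contravar; lra.
Qed.

Lemma exp_le_compat x y : x <= y -> exp x <= exp y.
Proof. intros [Hlt| -> ]; [now apply Rlt_le, exp_increasing|lra]. Qed.

Lemma exp_pow x n : exp x ^ n = exp (INR n * x).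
Proof.
  induction n as [|n IH]; [simpl; now rewrite Rmult_0_l, exp_0|].
  rewrite <- tech_pow_Rmult, IH, <- exp_plus, S_INR; f_equal; ring.
Qed.

Lemma good_of_index_bound psi z (k K : nat) :
  (k0 z <= Z.of_nat k)%Z -> (1 <= k)%nat ->
  (forall m, (1 <= m)%nat -> exp (- (INR k + 1)) <= zstar z m -> (m <= K)%nat) ->
  INR (S K) * INR k <= geninv psi (INR k) ->
  good psi z k.
Proof.
  intros Hk0 Hk1 HK HG; split; [exact Hk0|].
  set (L := exp (- INR k) :: exp (- (INR k + 1)) :: map (zstar z) (seq 1 K)).
  destruct (strictly_decreasing_enum (Dk z k) L) as [l [Hs [Hin Hlen]]].
  assert (HinD : forall d, In d l <-> Dk z k d).
  { intros d; rewrite Hin; split; [tauto|]; intros HD; split; auto.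
    destruct HD as [[m [Hm1 [-> [Hlo _]]]]|[ -> | -> ]]; unfold L; simpl; auto.
    right; right; apply in_map_iff; exists m; split; auto.
    apply in_seq; specialize (HK m Hm1 Hlo); lia. }
  exists l; split; [exact Hs|split; [exact HinD|]].
  assert (Hk : 1 <= INR k) by (apply (le_INR 1); auto).
  assert (HSK : 1 <= INR (S K)) by (apply (le_INR 1); lia).
  set (G := geninv psi (INR k)) in *.
  set (t := exp (- (INR k / (2 * G)))).
  assert (Ht : 0 <= t <= 1).
  { split; [apply Rlt_le, exp_pos|]; rewrite <- exp_0; apply exp_le_compat.
    assert (0 <= INR k / (2 * G)) by (apply Rdiv_le_0_compat; nra); lra. }
  assert (Hpos : forall w, In w l -> 0 < w).
  { intros w Hw; apply HinD in Hw; pose proof (exp_pos (- (INR k + 1))).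
    destruct Hw as [[m [_ [_ [Hm _]]]]|[ -> | -> ]]; try apply exp_pos; lra. }
  assert (Hgap : gap_prod t l * t ^ S K <= exp (- (INR k + 1)) / exp (- INR k)).
  { apply gap_prod_mul_pow_le_ratio; auto; try (apply HinD; right; auto).
    unfold L in Hlen; simpl in Hlen; rewrite length_map, length_seq in Hlen; lia. }
  assert (Htpow : exp (- (1 / 2)) <= t ^ S K).
  { unfold t; rewrite exp_pow; apply exp_le_compat.
    enough (INR (S K) * INR k / (2 * G) <= 1 / 2) by (unfold Rdiv in *; nra).
    apply (Rmult_le_reg_r (2 * G)); [nra|]; field_simplify; nra. }
  assert (Hratio : exp (- (INR k + 1)) / exp (- INR k) = exp (- (1 / 2)) * exp (- (1 / 2))).
  { unfold Rdiv; rewrite <- exp_Ropp, <- !exp_plus; f_equal; field. }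
  pose proof (gap_prod_pos t l Hpos); pose proof (exp_pos (- (1 / 2))); nra.
Qed.

Fixpoint psum (f : nat -> R) (n : nat) : R :=
  match n with O => 0 | S n' => psum f n' + f n' end.

Lemma psum_le_compat f n m : (forall k, 0 <= f k) -> (n <= m)%nat -> psum f n <= psum f m.
Proof. intros Hf Hnm; induction Hnm as [|m Hnm IH]; simpl; [lra|]; specialize (Hf m); lra. Qed.

Lemma psum_ge_mul_last f k : (forall i j, (i <= j)%nat -> f j <= f i) ->
  INR (S k) * f k <= psum f (S k).
Proof.
  intros Hf; enough (H : forall i, (i <= S k)%nat -> INR i * f k <= psum f i) by (apply H; lia).
  induction i as [|i IH]; intros Hi; cbn [psum]; [simpl; lra|].
  rewrite S_INR; specialize (IH ltac:(lia)); pose proof (Hf i k ltac:(lia)); lra.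
Qed.

Lemma nfloor_bounds x (Hx : 0 <= x) : INR (nfloor x Hx) <= x < INR (nfloor x Hx) + 1.
Proof. unfold nfloor; destruct (nfloor_ex x Hx) as [n Hn]; exact Hn. Qed.

Section SparseIndices.

Variable h : nat -> R.
Hypothesis h_pos : forall k, 0 < h k.
Hypothesis h_antitone : forall k k', (k <= k')%nat -> h k' <= h k.
Hypothesis h_psum_unbounded : forall M, exists n, M <= psum h n.

Let psum_h_le_compat n m : (n <= m)%nat -> psum h n <= psum h m.
Proof. apply psum_le_compat; intros k; apply Rlt_le, h_pos. Qed.

Let psum_h_nonneg n : 0 <= psum h n.
Proof. apply (psum_h_le_compat 0); lia. Qed.

Definition sparse_gap (k : nat) : nat := S (nfloor (sqrt (psum h (S k))) (sqrt_pos _)).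

Fixpoint sparse_index (r : nat) : nat :=
  match r with
  | O => O
  | S r' => (sparse_index r' + sparse_gap (sparse_index r'))%nat
  end.

Lemma sparse_gap_bounds k :
  sqrt (psum h (S k)) < INR (sparse_gap k) <= 1 + sqrt (psum h (S k)).
Proof.
  unfold sparse_gap; rewrite S_INR.
  pose proof (nfloor_bounds _ (sqrt_pos (psum h (S k)))); lra.
Qed.

Lemma sparse_gap_le_compat k k' : (k <= k')%nat -> (sparse_gap k <= sparse_gap k')%nat.
Proof.
  intros Hk; pose proof (sparse_gap_bounds k); pose proof (sparse_gap_bounds k').
  assert (sqrt (psum h (S k)) <= sqrt (psum h (S k')))
    by (apply sqrt_le_1_alt, psum_h_le_compat; lia).
  enough (sparse_gap k < S (sparse_gap k'))%nat by lia.
  apply INR_lt; rewrite S_INR; lra.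
Qed.

Lemma sparse_index_ge r : (r <= sparse_index r)%nat.
Proof. induction r as [|r IH]; simpl; [lia|]; unfold sparse_gap; lia. Qed.

Lemma sparse_index_lt r : (sparse_index r < sparse_index (S r))%nat.
Proof. simpl; unfold sparse_gap; lia. Qed.

Lemma is_lim_seq_sparse_gap :
  is_lim_seq (fun r => INR (sparse_index (S r)) - INR (sparse_index r)) p_infty.
Proof.
  apply is_lim_seq_spec; intros M.
  destruct (h_psum_unbounded ((Rabs M + 1) ^ 2)) as [N HN]; exists N; intros r Hr.
  simpl sparse_index; rewrite plus_INR.
  pose proof (sparse_gap_bounds (sparse_index r)) as [Hgap _].
  assert (Rabs M + 1 <= sqrt (psum h (S (sparse_index r)))).
  { rewrite <- (sqrt_pow2 (Rabs M + 1)) by (pose proof (Rabs_pos M); lra).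
    apply sqrt_le_1_alt; eapply Rle_trans; [apply HN|].
    apply psum_h_le_compat; pose proof (sparse_index_ge r); lia. }
  pose proof (Rle_abs M); lra.
Qed.

Let W n := psum (fun k => h k / INR (sparse_gap k)) n.

Lemma W_ge n : sqrt (1 + psum h n) - 1 <= W n.
Proof.
  induction n as [|n IH]; [unfold W; simpl; rewrite Rplus_0_r, sqrt_1; lra|].
  unfold W in *; cbn [psum].
  pose proof (sparse_gap_bounds n) as [Hg0 Hg]; cbn [psum] in Hg0, Hg.
  pose proof (psum_h_nonneg n); pose proof (h_pos n).
  set (s := psum h n) in *; set (g := INR (sparse_gap n)) in *.
  set (u := sqrt (1 + (s + h n))); set (v := sqrt (1 + s)).
  assert (Hu : u * u = 1 + (s + h n)) by (apply sqrt_sqrt; lra).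
  assert (Hv : v * v = 1 + s) by (apply sqrt_sqrt; lra).
  assert (Hv1 : 1 <= v) by (rewrite <- sqrt_1; apply sqrt_le_1_alt; lra).
  assert (Hvu : v <= u) by (apply sqrt_le_1_alt; lra).
  assert (sqrt (s + h n) <= u) by (apply sqrt_le_1_alt; lra).
  assert (Hg1 : 0 < g) by (pose proof (sqrt_pos (s + h n)); lra).
  assert (u - v <= h n / g).
  { apply (Rmult_le_reg_r g); [lra|]; unfold Rdiv; rewrite Rmult_assoc, Rinv_l by lra; nra. }
  fold v in IH; lra.
Qed.

Lemma W_block_le r : W (sparse_index (S r)) - W (sparse_index r) <= h (sparse_index r).
Proof.
  simpl sparse_index; set (b := sparse_index r).
  pose proof (sparse_gap_bounds b) as [Hg _]; pose proof (sqrt_pos (psum h (S b))).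
  assert (Hstep : forall i, W (b + i) - W b <= INR i * (h b / INR (sparse_gap b))).
  { induction i as [|i IH]; [rewrite Nat.add_0_r; simpl; lra|].
    rewrite Nat.add_succ_r; unfold W in *; cbn [psum]; rewrite S_INR.
    enough (h (b + i)%nat / INR (sparse_gap (b + i)) <= h b / INR (sparse_gap b)) by lra.
    pose proof (h_antitone b (b + i) ltac:(lia)); pose proof (h_pos (b + i)).
    pose proof (le_INR _ _ (sparse_gap_le_compat b (b + i) ltac:(lia))).
    unfold Rdiv; apply Rmult_le_compat; try lra.
    - apply Rlt_le, Rinv_0_lt_compat; lra.
    - apply Rinv_le_contravar; lra. }
  specialize (Hstep (sparse_gap b)).
  replace (INR (sparse_gap b) * (h b / INR (sparse_gap b))) with (h b) in Hstep by (field; lra).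
  exact Hstep.
Qed.

Lemma is_lim_seq_sparse_sum :
  is_lim_seq (fun n => sum_f_R0 (fun j => h (sparse_index (S j))) n) p_infty.
Proof.
  assert (Hblocks : forall n, W (sparse_index (S (S n))) - W (sparse_index 1)
                      <= sum_f_R0 (fun j => h (sparse_index (S j))) n).
  { induction n as [|n IH]; cbn [sum_f_R0]; [apply W_block_le|].
    pose proof (W_block_le (S (S n))); lra. }
  apply is_lim_seq_spec; intros M.
  set (c := Rabs M + 2 + Rabs (W (sparse_index 1))).
  assert (Hc : 0 <= c)
    by (unfold c; pose proof (Rabs_pos M); pose proof (Rabs_pos (W (sparse_index 1))); lra).
  destruct (h_psum_unbounded (c ^ 2)) as [N HN]; exists N; intros n Hn.
  eapply Rlt_le_trans; [|apply Hblocks].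
  set (b := sparse_index (S (S n))).
  pose proof (W_ge b).
  assert (c <= sqrt (1 + psum h b)).
  { rewrite <- (sqrt_pow2 c) by lra; apply sqrt_le_1_alt.
    enough (c ^ 2 <= psum h b) by lra.
    eapply Rle_trans; [apply HN|]; apply psum_h_le_compat.
    pose proof (sparse_index_ge (S (S n))); unfold b; lia. }
  unfold c in *; pose proof (Rle_abs M); pose proof (Rle_abs (W (sparse_index 1))); lra.
Qed.

End SparseIndices.

Definition log1 (x : R) : R := Rmax 1 (ln x).

Lemma log1_ge_1 x : 1 <= log1 x.
Proof. apply Rmax_l. Qed.

(* [ln 0 = 0] in Stdlib, so [log1 0 = 1] and monotonicity holds from [0] on. *)
Lemma log1_le_compat x y : 0 <= x -> x <= y -> log1 x <= log1 y.
Proof.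
  intros [Hx| <-] Hxy; [apply Rle_max_compat_l, ln_le; lra|].
  assert (Hln0 : ln 0 = 0) by (unfold ln; destruct Rlt_dec as [H0|_]; [exfalso; lra|easy]).
  unfold log1; rewrite Hln0; apply Rmax_lub; [apply Rmax_l|].
  apply (Rle_trans _ 1); [lra|apply Rmax_l].
Qed.

Lemma le_exp_log1 x : 0 <= x -> x <= exp (log1 x).
Proof.
  intros [Hx| <-]; [|apply Rlt_le, exp_pos].
  rewrite <- (exp_ln x) at 1 by exact Hx; apply exp_le_compat, Rmax_r.
Qed.

Lemma log1_le_2sqrt x : 1 <= x -> log1 x <= 2 * sqrt x.
Proof.
  intros Hx; set (s := sqrt x).
  assert (Hs : s * s = x) by (apply sqrt_sqrt; lra).
  assert (Hs1 : 1 <= s) by (unfold s; rewrite <- sqrt_1; apply sqrt_le_1_alt; lra).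
  assert (ln s < s).
  { pose proof (exp_ineq1_le s); rewrite <- (ln_exp s) at 2; apply ln_increasing; lra. }
  apply Rmax_lub; [lra|]; rewrite <- Hs, ln_mult by lra; lra.
Qed.

Lemma sum_f_R0_shift_psum f n : sum_f_R0 (fun j => f (S j)) n = psum f (S (S n)) - f O.
Proof. induction n as [|n IH]; cbn [sum_f_R0 psum]; [ring|]; rewrite IH; cbn [psum]; ring. Qed.

Section Weight.

Variable phi : R -> R.
Hypothesis phi_inc_bij : inc_bij phi.

Let A (k : nat) : R := log1 (INR k).
Let B (j : nat) : R := log1 (geninv phi (INR j)).

Definition weight (k : nat) : R := / Rmax (A k) (B (2 * k)).

Let B_le_compat j j' : (j <= j')%nat -> B j <= B j'.
Proof.
  intros Hj; apply log1_le_compat.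
  - apply geninv_spec, pos_INR; exact phi_inc_bij.
  - apply geninv_le_compat, le_INR; auto; apply pos_INR.
Qed.

Let weight_denom_ge_1 k : 1 <= Rmax (A k) (B (2 * k)).
Proof. apply (Rle_trans _ _ _ (log1_ge_1 _) (Rmax_l _ _)). Qed.

Lemma weight_pos k : 0 < weight k.
Proof. apply Rinv_0_lt_compat; pose proof (weight_denom_ge_1 k); lra. Qed.

Lemma weight_antitone k k' : (k <= k')%nat -> weight k' <= weight k.
Proof.
  intros Hk; apply Rinv_le_contravar; [pose proof (weight_denom_ge_1 k); lra|].
  apply Rmax_le_compat; [apply log1_le_compat, le_INR; auto; apply pos_INR|].
  apply B_le_compat; lia.
Qed.

Lemma psum_weight_ge_sqrt k : (1 <= k)%nat -> B (2 * k) <= A k ->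
  sqrt (INR k) / 2 <= psum weight (S k).
Proof.
  intros Hk HBA.
  eapply Rle_trans; [|apply psum_ge_mul_last; exact weight_antitone].
  unfold weight; rewrite Rmax_left by exact HBA.
  assert (Hk1 : 1 <= INR k) by (apply (le_INR 1); auto).
  pose proof (log1_le_2sqrt (INR k) Hk1); pose proof (log1_ge_1 (INR k)).
  assert (Hs : sqrt (INR k) * sqrt (INR k) = INR k) by (apply sqrt_sqrt; lra).
  rewrite S_INR; apply (Rmult_le_reg_r (A k)); [unfold A; lra|].
  rewrite Rmult_assoc, Rinv_l by (unfold A; lra); unfold A in *; nra.
Qed.

Lemma psum_weight_ge_half_psum_inv_B K d : (forall k, (K <= k)%nat -> A k <= B (2 * k)) ->
  psum (fun j => / B j) (2 * (K + d)) - psum (fun j => / B j) (2 * K)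
    <= 2 * (psum weight (K + d) - psum weight K).
Proof.
  intros HAB; induction d as [|d IH]; [rewrite Nat.add_0_r; lra|].
  replace (2 * (K + S d))%nat with (S (S (2 * (K + d)))) by lia.
  rewrite Nat.add_succ_r; cbn [psum].
  assert (Hw : weight (K + d) = / B (2 * (K + d))).
  { unfold weight; rewrite Rmax_right; auto; apply HAB; lia. }
  assert (/ B (S (2 * (K + d))) <= / B (2 * (K + d))).
  { apply Rinv_le_contravar; [apply (Rlt_le_trans _ 1); [lra|apply log1_ge_1]|].
    apply B_le_compat; lia. }
  lra.
Qed.

Lemma psum_weight_unbounded :
  is_lim_seq (fun n => sum_f_R0 (fun j => / log1 (geninv phi (INR (S j)))) n) p_infty ->
  forall M, exists n, M <= psum weight n.
Proof.
  intros Hlim M.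
  destruct (INR_unbounded (4 * M ^ 2 + 1)) as [K HK].
  assert (HK1 : (1 <= K)%nat) by (apply INR_lt; simpl; nra).
  destruct (classic (exists k, (K <= k)%nat /\ B (2 * k) <= A k)) as [[k [Hk HBA]]|HAB].
  - exists (S k); eapply Rle_trans; [|apply psum_weight_ge_sqrt; auto; lia].
    assert (HKk : INR K <= INR k) by (apply le_INR; auto).
    enough (2 * Rabs M <= sqrt (INR k)) by (pose proof (Rle_abs M); lra).
    rewrite <- (sqrt_pow2 (2 * Rabs M)) by (pose proof (Rabs_pos M); lra).
    apply sqrt_le_1_alt; pose proof (pow2_abs M); nra.
  - assert (HAB' : forall k, (K <= k)%nat -> A k <= B (2 * k)).
    { intros k Hk; apply Rnot_lt_le; intros HBA; apply HAB; exists k; split; auto; lra. }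
    assert (Hinv_le_1 : forall j, 0 < / B j <= 1).
    { intros j; pose proof (log1_ge_1 (geninv phi (INR j))); split.
      - apply Rinv_0_lt_compat; unfold B; lra.
      - rewrite <- Rinv_1; apply Rinv_le_contravar; unfold B; lra. }
    apply is_lim_seq_spec in Hlim; destruct (Hlim (2 * M + 2 * INR K + 2)) as [N HN].
    specialize (HN N (le_n N)); rewrite (sum_f_R0_shift_psum (fun j => / B j)) in HN.
    exists (K + N)%nat.
    pose proof (psum_weight_ge_half_psum_inv_B K N HAB').
    assert (psum (fun j => / B j) (S (S N)) <= psum (fun j => / B j) (2 * (K + N))).
    { apply psum_le_compat; [intros j; apply Rlt_le, Hinv_le_1|lia]. }
    assert (psum (fun j => / B j) (2 * K) <= 2 * INR K).
    { clear -Hinv_le_1; induction K as [|K IH]; [simpl; lra|].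
      replace (2 * S K)%nat with (S (S (2 * K))) by lia; cbn [psum]; rewrite S_INR.
      pose proof (Hinv_le_1 (2 * K)%nat); pose proof (Hinv_le_1 (S (2 * K))); lra. }
    assert (0 <= psum weight K)
      by (apply (psum_le_compat _ 0); [intros; apply Rlt_le, weight_pos|lia]).
    pose proof (Hinv_le_1 O); lra.
Qed.

Lemma weight_le_inv_log1_damp_inv k : (1 <= k)%nat ->
  weight k <= 3 * / log1 (damp_inv phi (INR k)).
Proof.
  intros Hk; unfold damp_inv, weight, A, B.
  replace (INR (2 * k)) with (2 * INR k) by (rewrite mult_INR; simpl; ring).
  set (y := INR k); assert (Hy : 1 <= y) by (apply (le_INR 1); auto).
  set (p := geninv phi (2 * y)).
  assert (Hp : 0 <= p) by (apply geninv_spec; auto; lra).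
  assert (Hp1 : 0 <= geninv phi y) by (apply geninv_spec; auto; lra).
  assert (Hpy : geninv phi y <= p) by (apply geninv_le_compat; auto; lra).
  set (M := Rmax y p).
  assert (M <= exp (Rmax (log1 y) (log1 p))).
  { unfold M; apply Rmax_lub.
    - apply (Rle_trans _ _ _ (le_exp_log1 y ltac:(lra))), exp_le_compat, Rmax_l.
    - apply (Rle_trans _ _ _ (le_exp_log1 p Hp)), exp_le_compat, Rmax_r. }
  set (X := Rmax (log1 y) (log1 p)) in *.
  assert (HX1 : 1 <= X) by (apply (Rle_trans _ _ _ (log1_ge_1 y) (Rmax_l _ _))).
  set (G := Rmax (geninv phi y) (Rmax (2 * y ^ 2) (2 * p ^ 2))).
  assert (HG2 : 2 <= G).
  { apply (Rle_trans _ (2 * y ^ 2)); [nra|apply (Rle_trans _ _ _ (Rmax_l _ _) (Rmax_r _ _))]. }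
  assert (HyM : y <= M) by apply Rmax_l.
  assert (HpM : p <= M) by apply Rmax_r.
  assert (HGM : G <= 2 * M ^ 2) by (unfold G; repeat apply Rmax_lub; nra).
  assert (Hln2 : ln 2 <= 1).
  { rewrite <- (ln_exp 1); apply ln_le; [lra|]; pose proof (exp_ineq1_le 1); lra. }
  assert (HlnG : ln G <= ln 2 + 2 * ln M).
  { apply (Rle_trans _ (ln (2 * M ^ 2))); [apply ln_le; lra|].
    rewrite ln_mult, ln_pow by nra; simpl INR; lra. }
  assert (ln M <= X) by (rewrite <- (ln_exp X); apply ln_le; nra).
  assert (Hlog : log1 G <= 3 * X) by (apply Rmax_lub; lra).
  pose proof (log1_ge_1 G).
  rewrite <- (Rinv_inv 3), <- Rinv_mult; apply Rinv_le_contravar; lra.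
Qed.

End Weight.

Lemma LimSup_seq_lt_p_infty_bounded (u : nat -> R) :
  Rbar_lt (LimSup_seq u) p_infty -> exists C n0, forall n, (n0 <= n)%nat -> u n <= C.
Proof.
  intros Hlt; destruct (ex_LimSup_seq u) as [l Hl].
  rewrite (is_LimSup_seq_unique _ _ Hl) in Hlt.
  destruct l as [l| |]; simpl in Hlt; [|easy|].
  - destruct (Hl (mkposreal 1 Rlt_0_1)) as [_ [N HN]].
    exists (l + 1), N; intros n Hn; specialize (HN n Hn); simpl in HN; lra.
  - destruct (Hl 0) as [N HN]; exists 0, N; intros n Hn; now apply Rlt_le, HN.
Qed.

Lemma zstar_le z m : zstar z m <= z m.
Proof. destruct m; simpl; [lra|apply Rmin_r]. Qed.

Lemma index_le_of_zstar_ge phi z C n0 : inc_bij phi ->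
  (forall n, (n0 <= n)%nat -> exp (phi (INR n)) * z n <= C) ->
  forall k m, (n0 <= m)%nat -> exp (- (INR k + 1)) <= zstar z m ->
  INR m <= geninv phi (INR k + 1 + ln C).
Proof.
  intros Hphi HC k m Hm Hz.
  pose proof (zstar_le z m); specialize (HC m Hm); pose proof (exp_pos (phi (INR m))).
  assert (Hexp : exp (phi (INR m) - (INR k + 1)) <= C).
  { unfold Rminus; rewrite exp_plus; nra. }
  apply ln_le in Hexp; [|apply exp_pos]; rewrite ln_exp in Hexp.
  pose proof (proj1 Hphi (INR m) (pos_INR m)).
  apply le_geninv; auto; [apply pos_INR|lra|lra].
Qed.

Lemma eventually_good phi z : inc_bij phi ->
  Rbar_lt (LimSup_seq (fun n => exp (phi (INR n)) * z n)) p_infty ->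
  exists T, forall k, (T <= k)%nat -> good (damp phi) z k.
Proof.
  intros Hphi Hls.
  destruct (LimSup_seq_lt_p_infty_bounded _ Hls) as [C0 [n0 HC0]].
  set (C := Rmax C0 1).
  assert (HC : forall n, (n0 <= n)%nat -> exp (phi (INR n)) * z n <= C)
    by (intros n Hn; eapply Rle_trans; [apply HC0; auto|apply Rmax_l]).
  assert (HlnC : 0 <= ln C) by (rewrite <- ln_1; apply ln_le; [lra|apply Rmax_r]).
  destruct (INR_unbounded (1 + ln C)) as [c Hc].
  exists (c + n0 + 1 + Z.to_nat (k0 z))%nat; intros k Hk.
  assert (Hck : INR c <= INR k) by (apply le_INR; lia).
  assert (Hn0k : INR n0 + 1 <= INR k) by (rewrite <- S_INR; apply le_INR; lia).
  set (q := geninv phi (2 * INR k)).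
  assert (Hq : 0 <= q) by (apply geninv_spec; auto; pose proof (pos_INR k); lra).
  pose proof (nfloor_bounds q Hq) as Hfloor.
  apply good_of_index_bound with (K := (n0 + nfloor q Hq)%nat); [lia|lia| |].
  - intros m _ Hm; destruct (le_lt_dec n0 m) as [Hnm|]; [|lia].
    assert (INR m <= q).
    { eapply Rle_trans; [apply (index_le_of_zstar_ge phi z C n0); eauto|].
      apply geninv_le_compat; auto; pose proof (pos_INR k); lra. }
    enough (m < S (nfloor q Hq))%nat by lia.
    apply INR_lt; rewrite S_INR; lra.
  - rewrite geninv_damp by (auto; apply pos_INR); unfold damp_inv; fold q.
    rewrite S_INR, plus_INR.
    apply (Rle_trans _ ((INR k + q) * INR k)); [apply Rmult_le_compat_r; [apply pos_INR|lra]|].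
    apply (Rle_trans _ (Rmax (2 * INR k ^ 2) (2 * q ^ 2))); [|apply Rmax_r].
    destruct (Rle_dec q (INR k)).
    + apply (Rle_trans _ (2 * INR k ^ 2)); [nra|apply Rmax_l].
    + apply (Rle_trans _ (2 * q ^ 2)); [nra|apply Rmax_r].
Qed.

Lemma count_upto_ge (P : nat -> Prop) T : (forall r, (T <= r)%nat -> P r) ->
  forall k, (k - T <= count_upto P k)%nat.
Proof.
  intros HP k; induction k as [|k IH]; cbn [count_upto]; [lia|].
  destruct excluded_middle_informative as [_|HnP]; [lia|].
  destruct (le_lt_dec T (S k)) as [HT|]; [exfalso; now apply HnP, HP|lia].
Qed.

Lemma LimInf_density_eventually (P : nat -> Prop) T : (forall r, (T <= r)%nat -> P r) ->
  Rbar_le 1 (LimInf_seq (fun k => INR (count_upto P k) / INR k)).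
Proof.
  intros HP.
  assert (Hlim : is_lim_seq (fun k => 1 - INR T * / INR k) (1 - INR T * 0)).
  { apply is_lim_seq_minus'; [apply is_lim_seq_const|].
    apply (is_lim_seq_scal_l _ (INR T) (Finite 0)).
    apply (is_lim_seq_inv _ p_infty); [apply is_lim_seq_INR|discriminate]. }
  rewrite Rmult_0_r, Rminus_0_r in Hlim.
  rewrite <- (is_LimInf_seq_unique _ _ (is_lim_LimInf_seq _ _ Hlim)).
  apply LimInf_le; exists (S T); intros k Hk.
  pose proof (le_INR _ _ (count_upto_ge P T HP k)) as Hc; rewrite minus_INR in Hc by lia.
  assert (0 < INR k) by (apply lt_0_INR; lia).
  apply (Rmult_le_reg_r (INR k)); [lra|].
  replace ((1 - INR T * / INR k) * INR k) with (INR k - INR T) by (field; lra).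
  replace (INR (count_upto P k) / INR k * INR k) with (INR (count_upto P k)) by (field; lra).
  exact Hc.
Qed.

Lemma is_lim_seq_sum_f_R0_p_infty_le (u v : nat -> R) (c : R) : 0 < c ->
  (forall n, u n <= c * v n) ->
  is_lim_seq (fun n => sum_f_R0 u n) p_infty -> is_lim_seq (fun n => sum_f_R0 v n) p_infty.
Proof.
  intros Hc Huv Hu; apply is_lim_seq_spec in Hu; apply is_lim_seq_spec; intros M.
  destruct (Hu (c * M)) as [N HN]; exists N; intros n Hn; specialize (HN n Hn).
  assert (sum_f_R0 u n <= c * sum_f_R0 v n).
  { rewrite scal_sum; apply sum_Rle; intros i _; rewrite Rmult_comm; apply Huv. }
  apply (Rmult_lt_reg_l c); lra.
Qed.

Theorem lemma2p6 (phi : R -> R) :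
  inc_bij phi ->
  is_lim_seq (fun n => sum_f_R0
      (fun j => / Rmax 1 (ln (geninv phi (INR (S j))))) n) p_infty ->
  exists (psi : R -> R) (a : nat -> nat),
    inc_bij psi /\
    (forall x, 0 <= x -> psi x <= phi x) /\
    (forall x, 0 <= x -> psi x <= sqrt x) /\
    (forall n, (a n < a (S n))%nat) /\
    is_lim_seq (fun j => INR (a (S j)) - INR (a j)) p_infty /\
    is_lim_seq (fun n => sum_f_R0
      (fun j => / Rmax 1 (ln (geninv psi (INR (a (S j)))))) n) p_infty /\
    forall z : nat -> R,
      (forall n, 0 < z n) ->
      Rbar_lt (LimSup_seq (fun n => exp (phi (INR n)) * z n)) p_infty ->
      Rbar_le (Finite (1/2))
        (LimInf_seq (fun k => INR (count_upto (fun r => good psi z (a r)) k) / INR k)).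
Proof.
  intros Hphi Hsum.
  set (h := weight phi).
  pose proof (weight_pos phi) as Hpos.
  pose proof (weight_antitone phi Hphi) as Hanti.
  pose proof (psum_weight_unbounded phi Hphi Hsum) as Hunb.
  pose proof (sparse_index_ge h) as Hage.
  exists (damp phi), (sparse_index h).
  split; [exact (inc_bij_damp phi Hphi)|].
  split; [intros x _; apply damp_le|].
  split; [exact (damp_le_sqrt phi)|].
  split; [exact (sparse_index_lt h)|].
  split; [exact (is_lim_seq_sparse_gap h Hpos Hunb)|].
  split.
  - apply (is_lim_seq_sum_f_R0_p_infty_le (fun j => h (sparse_index h (S j))) _ 3);
      [lra| |exact (is_lim_seq_sparse_sum h Hpos Hanti Hunb)].
    intros j; rewrite geninv_damp by (auto; apply pos_INR).
    apply weight_le_inv_log1_damp_inv; auto; specialize (Hage (S j)); lia.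
  -
    intros z _ Hls; destruct (eventually_good phi z Hphi Hls) as [T HT].
    apply (Rbar_le_trans _ 1); [simpl; lra|].
    apply (LimInf_density_eventually _ T); intros r Hr; apply HT.
    specialize (Hage r); lia.
Qed.
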